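(* Let $R$ be a ring, $n\in\mathbb{N}$, and suppose $a\in R$ can be written $a=e+v$ with $e^2=e$, $v$ a unit of $R$, $v^n=1$ and $ev=ve$. Then $(a^n-1)((a-1)^n-1)=0$.
   Context: All rings are associative with identity. *)

From mathcomp Require Import all_boot all_algebra.
Set Implicit Arguments. Unset Strict Implicit. Unset Printing Implicit Defensive.

(** With the complementary idempotent [f = 1 - e], an element [e + w] with [w]
    commuting with [e] acts as [1 + w] on [eR] and as [w] on [fR], so
    [(e + w)^n = e (1 + w)^n + f w^n].  Taking [w = v] and [w = v - 1] and using
    [v^n = 1] gives [a^n - 1 = e ((1 + v)^n - 1)] and
    [(a - 1)^n - 1 = f ((v - 1)^n - 1)]; their product vanishes because
    [(1 + v)^n - 1] commutes with [e] and [e f = 0]. *)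

From mathcomp Require Import all_boot all_algebra.
Import GRing.Theory.
Local Open Scope ring_scope.

Section Idempotent.

Variables (R : pzRingType) (e : R).
Hypothesis idem_e : e * e = e.

Lemma idem_mulrBC : e * (1 - e) = 0.
Proof. by rewrite mulrBr mulr1 idem_e subrr. Qed.

Lemma idem_comm_mulrBC (x : R) : GRing.comm e x -> e * x * (1 - e) = 0.
Proof. by move=> ex; rewrite ex -mulrA idem_mulrBC mulr0. Qed.

Lemma exprD_idem (w : R) (n : nat) : GRing.comm e w ->
  (e + w) ^+ n = e * (1 + w) ^+ n + (1 - e) * w ^+ n.
Proof.
move=> ew.
have fw : GRing.comm (1 - e) w := commr_sym (commrB (commr1 w) (commr_sym ew)).
elim: n => [|n IHn]; first by rewrite !expr0 !mulr1 addrC subrK.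
rewrite exprS IHn mulrDl !mulrDr !mulrA idem_e idem_mulrBC mul0r addr0.
by rewrite -ew -fw addrA -!mulrA -mulrDr -{1}(mul1r ((1 + w) ^+ n)) -mulrDl -!exprS.
Qed.

End Idempotent.

Theorem lemma2p1 (R : unitRingType) (n : nat) (a e v : R) :
  a = e + v -> e * e = e -> v \is a GRing.unit -> v ^+ n = 1 -> e * v = v * e ->
  (a ^+ n - 1) * ((a - 1) ^+ n - 1) = 0.
Proof.
move=> -> idem_e _ vn1 ev.
have ev1 : GRing.comm e (v - 1) := commrB ev (commr1 e).
have -> : (e + v) ^+ n - 1 = e * ((1 + v) ^+ n - 1).
  by rewrite exprD_idem // vn1 mulr1 mulrBr mulr1 addrAC addrA subrK.
have -> : (e + v - 1) ^+ n - 1 = (1 - e) * ((v - 1) ^+ n - 1).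
  rewrite -addrA exprD_idem // (addrC 1) subrK vn1 mulr1 mulrBr mulr1.
  by rewrite opprB addrA (addrC e).
rewrite mulrA idem_comm_mulrBC ?mul0r //.
exact: commrB (commrX n (commrD (commr1 e) ev)) (commr1 e).
Qed.
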